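(* Let $\Delta$ be a local derivation of $\mathcal{S}$ with $\Delta(G_0)=\Delta(G_1)=0$. Then $\Delta(G_m)=0$ for all $m\in\mathbb{Z}$.
   Context: $\mathcal{S}$ is the centerless super Virasoro algebra: the Lie superalgebra over $\mathbb{C}$ with basis $\{L_m,G_n: m,n\in\mathbb{Z}\}$, $L_m$ even, $G_n$ odd, and brackets $[L_m,L_n]=(m-n)L_{m+n}$, $[L_m,G_r]=(\frac m2-r)G_{m+r}$, $[G_r,G_s]=2L_{r+s}$. A homogeneous linear map $D$ of parity $|D|$ is a derivation if $D([x,y])=[D(x),y]+(-1)^{|D||x|}[x,D(y)]$ for homogeneous $x,y$; derivations are sums of even and odd ones. A linear map $\Delta:\mathcal{S}\to\mathcal{S}$ is a local derivation if for every $x$ there is a derivation $D_x$ with $\Delta(x)=D_x(x)$. *)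

From HB Require Import structures.
From mathcomp Require Import all_boot all_order all_algebra.
From mathcomp Require Import finmap.
From mathcomp.multinomials Require Import monalg.
Set Implicit Arguments. Unset Strict Implicit. Unset Printing Implicit Defensive.
Import Order.TTheory GRing.Theory Num.Theory.
Local Open Scope ring_scope.

(* Index set of the basis: inl m stands for L_m (even), inr n for G_n (odd). *)
Definition sv_idx := (int + int)%type.

Definition idx_parity (a : sv_idx) : bool :=
  match a with inl _ => false | inr _ => true end.

Section SuperVirasoro.
Variable C : numClosedFieldType.

(* The centerless super Virasoro algebra S as a C-vector space:
   finitely supported C-linear combinations of the basis indices. *)
Definition SV := {malg C[sv_idx]}.

Definition Lb (m : int) : SV := << inl m >>.
Definition Gb (n : int) : SV := << inr n >>.

Definition sv_brb (a b : sv_idx) : SV :=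
  match a, b with
  | inl m, inl n => (m - n)%:~R *: Lb (m + n)
  | inl m, inr r => (m%:~R / 2 - r%:~R) *: Gb (m + r)
  | inr r, inl m => - (m%:~R / 2 - r%:~R) *: Gb (m + r)
  | inr r, inr s => 2 *: Lb (r + s)
  end.

Definition sv_br (x y : SV) : SV :=
  \sum_(a <- msupp x) \sum_(b <- msupp y) (x@_a * y@_b) *: sv_brb a b.

Definition homog (p : bool) (x : SV) : Prop :=
  forall a, a \in msupp x -> idx_parity a = p.

Definition derivation_of_parity (p : bool) (D : SV -> SV) : Prop :=
  [/\ linear D,
      (forall q x, homog q x -> homog (addb q p) (D x)) &
      (forall q r x y, homog q x -> homog r y ->
         D (sv_br x y) = sv_br (D x) y + (-1) ^+ (p && q) *: sv_br x (D y))].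

Definition derivation (D : SV -> SV) : Prop :=
  exists D0 D1, [/\ derivation_of_parity false D0,
                    derivation_of_parity true D1 &
                    forall x, D x = D0 x + D1 x].

Definition local_derivation (Delta : SV -> SV) : Prop :=
  linear Delta /\ forall x, exists D, derivation D /\ Delta x = D x.

End SuperVirasoro.

From HB Require Import structures.
From mathcomp Require Import all_boot all_order all_algebra.
From mathcomp Require Import finmap.
From mathcomp.multinomials Require Import monalg.
From mathcomp.algebra_tactics Require Import ring.
From mathcomp Require Import zify.
Set Implicit Arguments. Unset Strict Implicit. Unset Printing Implicit Defensive.
Import GRing.Theory Num.Theory.
Local Open Scope ring_scope.

(* For a parity p, let w(v)(z) be the sum of the coefficients of v at the basis
   elements of parity p, each weighted by z^deg.  For a derivation D, the Leibniz rule for [L_0, G_k] determines every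
   coefficient of D(G_k) from D(L_0), except the "diagonal" one sitting at
   degree k; summing up gives w(D(G_k))(z) = z^k (alpha + k beta), because the
   diagonal coefficients are affine in k by the Leibniz rule for [L_{+-1}, G_k].
   Given m and z <> 0, locality yields a derivation D with
   Delta(G_m) = Delta(G_m + s G_0 + r G_1) = D(G_m + s G_0 + r G_1), where
   s = (m - 1) z^m and r = - m z^(m-1) make the combination
   z^m (alpha + m beta) + s alpha + r z (alpha + beta) vanish whatever alpha and
   beta are.  So w(Delta(G_m)) vanishes at every z <> 0, hence Delta(G_m) = 0. *)

Definition idx_deg (a : sv_idx) : int := match a with inl k | inr k => k end.

Definition idx_of (p : bool) (k : int) : sv_idx := if p then inr k else inl k.

Lemma idx_ofK a : idx_of (idx_parity a) (idx_deg a) = a.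
Proof. by case: a. Qed.

Lemma parity_idx_of p k : idx_parity (idx_of p k) = p.
Proof. by case: p. Qed.

Lemma deg_idx_of p k : idx_deg (idx_of p k) = k.
Proof. by case: p. Qed.

Lemma sv_idx_eqE a b :
  (a == b) = (idx_parity a == idx_parity b) && (idx_deg a == idx_deg b).
Proof. by case: a; case: b. Qed.

Lemma addr_eq_subr (V : zmodType) (x y z : V) : (x + y == z) = (x == z - y).
Proof. by rewrite [RHS]eq_sym subr_eq eq_sym. Qed.

Lemma affine_of_const_step (V : zmodType) (f : int -> V) (g : V) :
  (forall k, f (k + 1) = f k + g) -> forall k, f k = f 0 + g *~ k.
Proof.
move=> step; elim/int_ind => [|n IH|n IH]; first by rewrite mulr0z addr0.
  by rewrite -addn1 PoszD step IH mulrzDr mulr1z addrA.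
have := step (- n.+1%:Z); rewrite (_ : - n.+1%:Z + 1 = - n%:Z); last by lia.
move=> /eqP; rewrite -subr_eq IH => /eqP <-.
by rewrite -addn1 PoszD opprD mulrzDr mulrN1z addrA.
Qed.

Lemma half_sub_int_neq0 (F : numFieldType) (k : int) :
  (1 / 2 - k%:~R : F) != 0.
Proof.
rewrite subr_eq0; apply/eqP => h.
have : (1%:~R : F) = (2 * k)%:~R by rewrite intrM -h mul1r divff // pnatr_eq0.
by move/eqP; rewrite eqr_int; apply/negP/eqP; lia.
Qed.

Section Pairing.
Variable C : numClosedFieldType.
Local Notation SV := (SV C).
Implicit Types (phi psi : sv_idx -> C) (v x y : SV).

Definition ev phi v : C := mmap idfun phi v.

Lemma evE phi v : ev phi v = \sum_(a <- msupp v) v@_a * phi a.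
Proof. by []. Qed.

Lemma evDr phi x y : ev phi (x + y) = ev phi x + ev phi y.
Proof. exact: mmapD. Qed.

Lemma evZr phi c v : ev phi (c *: v) = c * ev phi v.
Proof.
rewrite /ev (mmapEw (msuppZ_le c v)) mmapE big_distrr /=.
by apply: eq_bigr => a _; rewrite mcoeffZ mulrA.
Qed.

Lemma ev_sumr phi (I : Type) (s : seq I) (F : I -> SV) :
  ev phi (\sum_(i <- s) F i) = \sum_(i <- s) ev phi (F i).
Proof. exact: raddf_sum. Qed.

Lemma evU phi a : ev phi << a >> = phi a.
Proof. by rewrite /ev mmapU mul1r. Qed.

Lemma eq_ev phi psi v : phi =1 psi -> ev phi v = ev psi v.
Proof. by move=> e; apply: eq_bigr => a _; rewrite e. Qed.

Lemma evDl phi psi v : ev (fun a => phi a + psi a) v = ev phi v + ev psi v.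
Proof. by rewrite /ev !mmapE -big_split; apply: eq_bigr => a _; rewrite mulrDr. Qed.

Lemma evZl c phi v : ev (fun a => c * phi a) v = c * ev phi v.
Proof. by rewrite /ev !mmapE big_distrr; apply: eq_bigr => a _; rewrite mulrCA. Qed.

Lemma evBl phi psi v : ev (fun a => phi a - psi a) v = ev phi v - ev psi v.
Proof. by rewrite /ev !mmapE -sumrB; apply: eq_bigr => a _; rewrite mulrBr. Qed.

Lemma ev_delta b v : ev (fun a => (a == b)%:R) v = v@_b.
Proof.
rewrite /ev (mmapEw (fsubsetUr [fset b] (msupp v)))%fset.
rewrite (bigD1_seq b) ?fset_uniq ?inE ?eqxx //= mulr1 big1 ?addr0 // => a.
by rewrite eq_sym => /negbTE ->; rewrite mulr0.
Qed.

End Pairing.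

Section Bracket.
Variable C : numClosedFieldType.
Local Notation SV := (SV C).
Implicit Types (phi : sv_idx -> C) (v x y : SV).

Definition brb_coef (a b : sv_idx) : C :=
  match a, b with
  | inl m, inl n => (m - n)%:~R
  | inl m, inr r => m%:~R / 2 - r%:~R
  | inr r, inl m => - (m%:~R / 2 - r%:~R)
  | inr r, inr s => 2
  end.

Definition brb_idx (a b : sv_idx) : sv_idx :=
  match a, b with
  | inl m, inl n => inl (m + n)
  | inl m, inr r | inr r, inl m => inr (m + r)
  | inr r, inr s => inl (r + s)
  end.

Lemma sv_brbE a b : sv_brb C a b = brb_coef a b *: << brb_idx a b >>.
Proof. by case: a; case: b. Qed.

Lemma ev_br phi x y : ev phi (sv_br x y) =
  ev (fun a => ev (fun b => brb_coef a b * phi (brb_idx a b)) y) x.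
Proof.
rewrite /sv_br ev_sumr [RHS]evE; apply: eq_bigr => a _.
rewrite ev_sumr evE big_distrr; apply: eq_bigr => b _.
by rewrite /= evZr sv_brbE evZr evU !mulrA.
Qed.

Lemma ev_br_Gb phi v k : ev phi (sv_br v (Gb C k)) =
  ev (fun a => brb_coef a (inr k) * phi (brb_idx a (inr k))) v.
Proof. by rewrite ev_br; apply: eq_ev => a; rewrite /Gb evU. Qed.

Lemma ev_br_Lb phi j v : ev phi (sv_br (Lb C j) v) =
  ev (fun b => brb_coef (inl j) b * phi (brb_idx (inl j) b)) v.
Proof. by rewrite ev_br /Lb evU. Qed.

Lemma sv_brDl x y w : sv_br (x + y) w = sv_br x w + sv_br y w.
Proof. by apply/malgP => c; rewrite mcoeffD -!ev_delta !ev_br evDr. Qed.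

Lemma sv_brDr x y w : sv_br x (y + w) = sv_br x y + sv_br x w.
Proof.
apply/malgP => c; rewrite mcoeffD -!ev_delta !ev_br -evDl.
by apply: eq_ev => a; rewrite evDr.
Qed.

Lemma sv_br_LbGb j k :
  sv_br (Lb C j) (Gb C k) = (j%:~R / 2 - k%:~R) *: Gb C (j + k).
Proof. by apply/malgP => c; rewrite -ev_delta ev_br_Lb evU mcoeffZ -ev_delta evU. Qed.

Lemma brb_L0 phi b :
  brb_coef (inl 0) b * phi (brb_idx (inl 0) b) = - (idx_deg b)%:~R * phi b.
Proof. by case: b => n /=; rewrite (add0r n) ?sub0r ?intrN // mul0r sub0r. Qed.

End Bracket.

Arguments brb_coef {C} a b.

Section Derivations.
Variable C : numClosedFieldType.
Local Notation SV := (SV C).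

Lemma homog_Lb j : homog false (Lb C j).
Proof. by move=> a; rewrite /Lb msuppU oner_eq0 inE => /eqP ->. Qed.

Lemma homog_Gb k : homog true (Gb C k).
Proof. by move=> a; rewrite /Gb msuppU oner_eq0 inE => /eqP ->. Qed.

Lemma derivation_linear (D : SV -> SV) : derivation D ->
  forall a x y, D (a *: x + y) = a *: D x + D y.
Proof.
by case=> D0 [D1 [[l0 _ _] [l1 _ _] eD]] a x y; rewrite !eD l0 l1 scalerDr addrACA.
Qed.

Lemma derivation_scale (D : SV -> SV) :
  derivation D -> forall a x, D (a *: x) = a *: D x.
Proof.
case=> D0 [D1 [[l0 _ _] [l1 _ _] eD]] a x.
by rewrite !eD (scalable_linear l0) (scalable_linear l1) scalerDr.
Qed.

Lemma derivation_leibniz_even (D : SV -> SV) q x y : derivation D ->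
  homog false x -> homog q y -> D (sv_br x y) = sv_br (D x) y + sv_br x (D y).
Proof.
case=> D0 [D1 [[_ _ L0] [_ _ L1] eD]] hx hy.
rewrite !eD (L0 _ _ _ _ hx hy) (L1 _ _ _ _ hx hy) !andbF expr0 !scale1r.
by rewrite sv_brDl sv_brDr addrACA.
Qed.

End Derivations.

Section DerivationCoefficients.
Variable C : numClosedFieldType.
Local Notation SV := (SV C).
Variable D : SV -> SV.
Hypothesis derD : derivation D.

Lemma ev_der_leibniz phi j k :
  (j%:~R / 2 - k%:~R) * ev phi (D (Gb C (j + k))) =
    ev (fun a => brb_coef a (inr k) * phi (brb_idx a (inr k))) (D (Lb C j)) +
    ev (fun b => brb_coef (inl j) b * phi (brb_idx (inl j) b)) (D (Gb C k)).
Proof.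
rewrite -evZr -(derivation_scale derD) -sv_br_LbGb.
rewrite (derivation_leibniz_even derD (@homog_Lb C j) (@homog_Gb C k)).
by rewrite evDr ev_br_Gb ev_br_Lb.
Qed.

Lemma der_coef_L j k n :
  (j%:~R / 2 - k%:~R) * (D (Gb C (j + k)))@_(inl n) =
    2 * (D (Lb C j))@_(inr (n - k)) + (j - (n - j))%:~R * (D (Gb C k))@_(inl (n - j)).
Proof.
rewrite -!ev_delta ev_der_leibniz -!evZl; congr (_ + _); apply: eq_ev => -[i|i];
  rewrite !sv_idx_eqE /= ?mulr0 //.
- by rewrite addr_eq_subr.
- by rewrite [j + i]addrC addr_eq_subr; have [->|] := eqVneq i (n - j); rewrite ?mulr0.
Qed.

Lemma der_coef_G j k n :
  (j%:~R / 2 - k%:~R) * (D (Gb C (j + k)))@_(inr n) =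
    ((n - k)%:~R / 2 - k%:~R) * (D (Lb C j))@_(inl (n - k)) +
    (j%:~R / 2 - (n - j)%:~R) * (D (Gb C k))@_(inr (n - j)).
Proof.
rewrite -!ev_delta ev_der_leibniz -!evZl; congr (_ + _); apply: eq_ev => -[i|i];
  rewrite !sv_idx_eqE /= ?mulr0 //.
- by rewrite addr_eq_subr; have [->|] := eqVneq i (n - k); rewrite ?mulr0.
- by rewrite [j + i]addrC addr_eq_subr; have [->|] := eqVneq i (n - j); rewrite ?mulr0.
Qed.

Lemma der_diag_L_step k :
  (D (Gb C (k + 1)))@_(inl (k + 1)) = (D (Gb C k))@_(inl k) +
    4 / 5 * ((D (Lb C 1))@_(inr 1) + (D (Lb C (-1)))@_(inr (-1))).
Proof.
have e1 := der_coef_L 1 k (k + 1).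
have e2 := der_coef_L (-1) (k + 1) k.
have [E1 E2 E3] : [/\ k + 1 - k = 1, k + 1 - 1 = k & -1 + (k + 1) = k] by split; lia.
have [E4 E5] : k - (k + 1) = -1 /\ k - -1 = k + 1 by split; lia.
rewrite (addrC 1 k) E1 E2 in e1; rewrite E3 E4 E5 in e2.
move: e1 e2; rewrite !intrB !intrD !intrN !mulr1z.
set c1 := _@_(inl (k + 1)); set c0 := _@_(inl k).
set P := _@_(inr 1); set Q := _@_(inr (-1)); set K : C := k%:~R.
clearbody c1 c0 P Q K => e1 e2; have two_neq0 : (2 : C) != 0 by rewrite pnatr_eq0.
have five_neq0 : (5 : C) != 0 by rewrite pnatr_eq0.
apply/eqP; rewrite -subr_eq0.
have -> : c1 - (c0 + 4 / 5 * (P + Q)) =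
    2 / 5 * (((1 / 2 - K) * c1 - (2 * P + (1 - K) * c0)) +
             ((-1 / 2 - (K + 1)) * c0 - (2 * Q + (-1 - (K + 1)) * c1))) by field.
by rewrite e1 e2 !subrr addr0 mulr0.
Qed.

Lemma der_diag_G_step k :
  (D (Gb C (k + 1)))@_(inr (k + 1)) = (D (Gb C k))@_(inr k) + (D (Lb C 1))@_(inl 1).
Proof.
have [E1 E2] : k + 1 - k = 1 /\ k + 1 - 1 = k by split; lia.
have := der_coef_G 1 k (k + 1); rewrite (addrC 1 k) E1 E2 !mulr1z -mulrDr.
by move=> /(mulfI (half_sub_int_neq0 _ k)) ->; rewrite addrC.
Qed.

Lemma der_Gb_diag_affine p :
  exists a b : C, forall k, (D (Gb C k))@_(idx_of p k) = a + k%:~R * b.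
Proof.
case: p.
- exists (D (Gb C 0))@_(inr 0), (D (Lb C 1))@_(inl 1) => k; rewrite mulrzl.
  exact: (affine_of_const_step (f := fun k => (D (Gb C k))@_(inr k)) der_diag_G_step).
- exists (D (Gb C 0))@_(inl 0),
    (4 / 5 * ((D (Lb C 1))@_(inr 1) + (D (Lb C (-1)))@_(inr (-1)))) => k.
  rewrite mulrzl.
  exact: (affine_of_const_step (f := fun k => (D (Gb C k))@_(inl k)) der_diag_L_step).
Qed.

Lemma ev_der_Gb_deg phi k :
  ev (fun b => (idx_deg b - k)%:~R * phi b) (D (Gb C k)) =
    ev (fun a => brb_coef a (inr k) * phi (brb_idx a (inr k))) (D (Lb C 0)).
Proof.
have := ev_der_leibniz phi 0 k; rewrite add0r mul0r sub0r => /eqP.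
rewrite -subr_eq -evZl -evBl => /eqP <-; apply: eq_ev => b.
by rewrite brb_L0 !mulNr opprK intrB mulrBl addrC.
Qed.

End DerivationCoefficients.

(* ev (zweight p z) v is the Laurent generating function of the parity-p part
   of v, evaluated at z. *)
Definition zweight (R : unitRingType) (p : bool) (z : R) (a : sv_idx) : R :=
  if idx_parity a == p then z ^ idx_deg a else 0.

Section GeneratingFunction.
Variable C : numClosedFieldType.
Variable z : C.
Hypothesis z_neq0 : z != 0.
Variable D : SV C -> SV C.
Hypothesis derD : derivation D.

Lemma ev_zweight_der_Gb p : exists a b : C, forall k,
  ev (zweight p z) (D (Gb C k)) = z ^ k * (a + k%:~R * b).
Proof.
have [c [g diag]] := der_Gb_diag_affine derD p.
(* [w] and [chi] divide by a degree that may vanish; the junk value x / 0 = 0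
   is exactly what discards the diagonal term. *)
pose w (a : sv_idx) := zweight p z a / (idx_deg a)%:~R.
pose A (a : sv_idx) :=
  match a with inl i => i%:~R / 2 * w (inr i) | inr i => 2 * w (inl i) end.
pose B (a : sv_idx) := match a with inl i => w (inr i) | inr _ => 0 end.
exists (c + ev A (D (Lb C 0))), (g - ev B (D (Lb C 0))) => k.
pose chi a := zweight p z a / (idx_deg a - k)%:~R.
have split_diag : zweight p z =1
    (fun b => (idx_deg b - k)%:~R * chi b + z ^ k * (b == idx_of p k)%:R).
  move=> b; rewrite /chi /zweight sv_idx_eqE parity_idx_of deg_idx_of.
  have [_|_] := eqVneq (idx_parity b) p; last by rewrite mul0r mulr0 add0r mulr0.
  have [->|ne] := eqVneq (idx_deg b) k; first by rewrite subrr mul0r add0r mulr1.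
  by rewrite mulr0 addr0 mulrC divfK // intr_eq0 subr_eq0.
have shift : (fun a => brb_coef a (inr k) * chi (brb_idx a (inr k))) =1
    (fun a => z ^ k * (A a - k%:~R * B a)).
  by case=> i; rewrite /chi /A /B /w /zweight /= addrK; case: ifP => _;
    rewrite ?expfzDr //; ring.
rewrite (eq_ev _ split_diag) evDl evZl ev_delta (ev_der_Gb_deg derD) (eq_ev _ shift).
by rewrite evZl evBl evZl diag; ring.
Qed.

End GeneratingFunction.

Lemma poly_eq0_nonzero_roots (R : numDomainType) (P : {poly R}) :
  (forall z, z != 0 -> P.[z] = 0) -> P = 0.
Proof.
move=> P_root; apply: (@roots_geq_poly_eq0 _ _ [seq n.+1%:R | n <- iota 0 (size P)]).
- by apply/allP => _ /mapP[n _ ->]; rewrite /root P_root // pnatr_eq0.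
- by rewrite map_inj_uniq ?iota_uniq // => m n /eqP; rewrite eqr_nat eqSS => /eqP.
- by rewrite size_map size_iota.
Qed.

Lemma zweight_eq0_coef (C : numClosedFieldType) p (v : SV C) :
  (forall z : C, z != 0 -> ev (zweight p z) v = 0) -> forall k, v@_(idx_of p k) = 0.
Proof.
move=> H k; have [a0_in|] := boolP (idx_of p k \in msupp v); last exact: mcoeff_outdom.
pose N := \max_(a <- msupp v) absz (idx_deg a).
have deg_N a : a \in msupp v -> 0 <= idx_deg a + N%:Z.
  move=> a_in; have := @leq_bigmax_seq _ _ xpredT (fun a => absz (idx_deg a)) a a_in isT.
  by rewrite -/N; lia.
pose Q a : {poly C} := if idx_parity a == p then 'X^(absz (idx_deg a + N%:Z)) else 0.
pose P := \sum_(a <- msupp v) v@_a *: Q a.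
have P_root z : z != 0 -> P.[z] = z ^+ N * ev (zweight p z) v.
  move=> z_neq0; rewrite horner_sum evE big_distrr /=; apply/eq_big_seq => a a_in.
  rewrite hornerZ /Q /zweight; case: eqP => _; last by rewrite horner0 !mulr0.
  rewrite hornerXn exprnP gez0_abs ?deg_N // expfzDr // -exprnP.
  by rewrite [_ * z ^+ N]mulrC mulrCA.
have P0 : P = 0 by apply: poly_eq0_nonzero_roots => z z0; rewrite P_root // H // mulr0.
have := congr1 (fun P : {poly C} => P`_(absz (k + N%:Z))) P0.
rewrite coef0 /P coef_sum (bigD1_seq (idx_of p k)) ?fset_uniq //= big_seq_cond big1 ?addr0.
  by rewrite coefZ /Q parity_idx_of deg_idx_of eqxx coefXn eqxx mulr1.
move=> a /andP[a_in a_ne]; rewrite coefZ /Q; case: eqP => [hp|_]; last by rewrite coef0 mulr0.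
rewrite coefXn; case: eqP => [e|_]; last by rewrite mulr0.
have := deg_N _ a0_in; rewrite deg_idx_of => deg_k.
have deg_a : idx_deg a = k by have := deg_N _ a_in; lia.
by move: a_ne; rewrite -(idx_ofK a) hp deg_a eqxx.
Qed.

Lemma sv_eq0_zweight (C : numClosedFieldType) (v : SV C) :
  (forall p (z : C), z != 0 -> ev (zweight p z) v = 0) -> v = 0.
Proof.
move=> H; apply/malgP => a; rewrite mcoeff0 -(idx_ofK a).
by apply: zweight_eq0_coef; apply: H.
Qed.

Lemma zpow_affine_comb_eq0 (F : fieldType) (z a b : F) (f : int -> F) (m : int) :
  z != 0 -> (forall k, f k = z ^ k * (a + k%:~R * b)) ->
  (m%:~R - 1) * z ^ m * f 0 + (- m%:~R * z ^ m / z * f 1 + f m) = 0.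
Proof. by move=> z_neq0 f_E; rewrite !f_E expr0z expr1z mulr0z mulr1z; field. Qed.

Theorem lemma3p6 (C : numClosedFieldType) (Delta : SV C -> SV C) :
  local_derivation Delta ->
  Delta (Gb C 0) = 0 -> Delta (Gb C 1) = 0 ->
  forall m : int, Delta (Gb C m) = 0.
Proof.
move=> [linDelta localDelta] Delta_G0 Delta_G1 m; apply: sv_eq0_zweight => p z z_neq0.
pose x := ((m%:~R - 1) * z ^ m) *: Gb C 0 + ((- m%:~R * z ^ m / z) *: Gb C 1 + Gb C m).
have -> : Delta (Gb C m) = Delta x by rewrite 2!linDelta Delta_G0 Delta_G1 !scaler0 !add0r.
have [D [derD ->]] := localDelta x.
have [a [b ev_DG]] := ev_zweight_der_Gb z_neq0 derD p.
(* Stated for abstract vectors: rewriting evZr in the goal itself makes Coq try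
   to unify D (Gb C 0) with D (Gb C 1) by unfolding the finite maps. *)
have ev_comb (u0 u1 u2 : SV C) c0 c1 : ev (zweight p z) (c0 *: u0 + (c1 *: u1 + u2)) =
    c0 * ev (zweight p z) u0 + (c1 * ev (zweight p z) u1 + ev (zweight p z) u2).
  by rewrite 2!evDr 2!evZr.
rewrite 2!(derivation_linear derD) ev_comb.
exact: zpow_affine_comb_eq0 z_neq0 ev_DG.
Qed.
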